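(* Let $\alpha_1,\alpha_2,\alpha_3\in\mathbb{Z}$ with $\alpha_1\ge\alpha_2\ge0\ge\alpha_3$, and put $b=-\alpha_1-\alpha_2-\alpha_3$, $c=\alpha_1\alpha_2+\alpha_1\alpha_3+\alpha_2\alpha_3$, $c_1=-\alpha_1\alpha_2\alpha_3$. Let $a_1>a_2>0$ be real numbers and set $$P=a_1^3a_2^2+a_1^2a_2^3+(a_1^2a_2+a_1a_2^2)bc_1+(a_1^2+a_2^2)c_1^2+2a_1^2a_2^2c.$$ Then the two inequalities $$P\le0\quad\text{and}\quad P^2-(a_1-a_2)^2\bigl((a_1+a_2)c_1^2-a_1^2a_2^2+a_1a_2bc_1\bigr)^2\ge0$$ hold simultaneously if and only if $-\alpha_2\alpha_3\le a_2<a_1\le-\alpha_1\alpha_3$. *)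

From Stdlib Require Import Reals ZArith.
Open Scope R_scope.

Definition Ppoly (a1 a2 b c c1 : R) : R :=
  a1^3 * a2^2 + a1^2 * a2^3 + (a1^2 * a2 + a1 * a2^2) * b * c1
  + (a1^2 + a2^2) * c1^2 + 2 * a1^2 * a2^2 * c.

From Stdlib Require Import Reals ZArith Lra Psatz.
Open Scope R_scope.

(* With F(t) = (t + α1α2)(t + α2α3)(t + α1α3), Vieta's formulas give
   P = a1^2 F(a2) + a2^2 F(a1), and the second expression equals
   4 a1^2 a2^2 F(a1) F(a2), i.e. 4 times the product of the two summands of P.
   A sum is nonpositive with nonnegative product iff both terms are
   nonpositive, so the conditions say F(a1) <= 0 and F(a2) <= 0.  The root
   -α1α2 is <= 0 < a_i, so this means that both a_i lie between the two other
   roots -α2α3 <= -α1α3. *)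

Definition cubic_of_roots (u v w t : R) : R := (t - u) * (t - v) * (t - w).

Lemma sum_nonpos_prod_nonneg_iff (p q : R) :
  p + q <= 0 /\ p * q >= 0 <-> p <= 0 /\ q <= 0.
Proof. split; [intros [Hs Hp] | intros [Hp Hq]]; nra. Qed.

Lemma quadratic_nonpos_iff (u v t : R) :
  u <= v -> (t - u) * (t - v) <= 0 <-> u <= t <= v.
Proof. intros Huv; split; [intros H | intros [Hu Hv]]; nra. Qed.

Lemma cubic_of_roots_nonpos_iff (u v w t : R) :
  u < t -> v <= w -> cubic_of_roots u v w t <= 0 <-> v <= t <= w.
Proof.
  intros Hut Hvw; unfold cubic_of_roots.
  rewrite <- quadratic_nonpos_iff by exact Hvw.
  rewrite Rmult_assoc.
  split; intros H.
  - apply (Rmult_le_reg_l (t - u)); lra.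
  - assert (0 <= (t - u) * - ((t - v) * (t - w))) by (apply Rmult_le_pos; lra).
    lra.
Qed.

Section Vieta.

Variables x y z a1 a2 : R.

Let F := cubic_of_roots (- (x * y)) (- (y * z)) (- (x * z)).
Let P := Ppoly a1 a2 (- x - y - z) (x * y + x * z + y * z) (- (x * y * z)).

Lemma Ppoly_vieta : P = a1^2 * F a2 + a2^2 * F a1.
Proof. unfold P, F, Ppoly, cubic_of_roots; ring. Qed.

Lemma Ppoly_discriminant_vieta :
  let b := - x - y - z in let c1 := - (x * y * z) in
  P^2 - (a1 - a2)^2 * ((a1 + a2) * c1^2 - a1^2 * a2^2 + a1 * a2 * b * c1)^2
  = 4 * ((a1^2 * F a2) * (a2^2 * F a1)).
Proof. unfold P, F, Ppoly, cubic_of_roots; simpl; ring. Qed.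

Lemma Ppoly_conditions_iff_between_roots :
  y <= x -> 0 <= y -> z <= 0 -> a2 < a1 -> 0 < a2 ->
  let b := - x - y - z in let c1 := - (x * y * z) in
  (P <= 0 /\
   P^2 - (a1 - a2)^2 * ((a1 + a2) * c1^2 - a1^2 * a2^2 + a1 * a2 * b * c1)^2 >= 0)
  <-> (- (y * z) <= a2 /\ a2 < a1 /\ a1 <= - (x * z)).
Proof.
  intros Hyx Hy Hz Ha Ha2 b c1.
  assert (Hxy : - (x * y) <= 0) by nra.
  assert (Hroots : - (y * z) <= - (x * z)) by nra.
  assert (Hsq1 : 0 < a1^2) by (apply pow_lt; lra).
  assert (Hsq2 : 0 < a2^2) by (apply pow_lt; lra).
  unfold b, c1; rewrite Ppoly_discriminant_vieta, Ppoly_vieta.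
  transitivity (a1^2 * F a2 <= 0 /\ a2^2 * F a1 <= 0).
  { rewrite <- sum_nonpos_prod_nonneg_iff; lra. }
  assert (Hscale : forall s t, 0 < s -> s * t <= 0 <-> t <= 0).
  { intros s t Hs; split; intros H; [apply (Rmult_le_reg_l s) | ]; nra. }
  rewrite !Hscale by assumption.
  unfold F; rewrite !cubic_of_roots_nonpos_iff by lra.
  lra.
Qed.

End Vieta.

Theorem lemma2 (al1 al2 al3 : Z) (a1 a2 : R)
  (h12 : (al1 >= al2)%Z) (h2 : (al2 >= 0)%Z) (h3 : (0 >= al3)%Z)
  (ha : a1 > a2) (ha2 : a2 > 0) :
  let b : R := IZR (- al1 - al2 - al3)%Z in
  let c : R := IZR (al1 * al2 + al1 * al3 + al2 * al3)%Z in
  let c1 : R := IZR (- (al1 * al2 * al3))%Z in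
  let P := Ppoly a1 a2 b c c1 in
  (P <= 0 /\
   P^2 - (a1 - a2)^2 * ((a1 + a2) * c1^2 - a1^2 * a2^2 + a1 * a2 * b * c1)^2 >= 0)
  <->
  (IZR (- (al2 * al3))%Z <= a2 /\ a2 < a1 /\ a1 <= IZR (- (al1 * al3))%Z).
Proof.
  intros b c c1 P; unfold P, b, c, c1.
  rewrite !minus_IZR, !plus_IZR, !opp_IZR, !mult_IZR.
  apply Ppoly_conditions_iff_between_roots; try lra.
  - apply Rge_le, IZR_ge; exact h12.
  - apply Rge_le, IZR_ge; exact h2.
  - apply Rge_le, IZR_ge; exact h3.
Qed.
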